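(* Let $G_{\lambda,k}$ be a skeleton of a connected graph $G$, and let $G''=G_{(\lambda,k)_{(2,2)}}$. If two sets of vertices are $n$-disjoint in $G''$ for some $n>1$, then their preimages in $G_{\lambda,k}$ (under the natural map $G_{\lambda,k}\to G''$) are $(n+\frac n2)$-disjoint.
   Context: $d$ is the graph metric of the relevant graph. Sets $X,Y$ are $r$-disjoint if $d(a,b)>r$ for all $a\in X,b\in Y$. A set $X$ is $k$-connected if any two of its points are joined by a finite sequence in $X$ with consecutive distances $\le k$. Skeleton $\Gamma_{\lambda,k}$ of a connected graph $\Gamma$ (root $x_0$, scale $\lambda\ge1$, connectivity $k\ge1$): layers $A_{N,\lambda}=\{x: N\lambda<d(x,x_0)\le(N+1)\lambda\}$, $N\in\mathbb Z$; blocks are the maximal $k$-connected subsets of layers (distances in $\Gamma$); $\Gamma_{\lambda,k}$ has a vertex per block and an edge between two blocks iff an edge of $\Gamma$ joins them; the natural map sends each vertex to its block. $G_{(\lambda,k)_{(2,2)}}$ is the skeleton of the graph $G_{\lambda,k}$ with scale $2$ and connectivity $2$, rooted at the block containing the root of $G$. *)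

From Stdlib Require Import Reals Arith.
Open Scope R_scope.

Section Graphs.
Variable V : Type.
Variable adj : V -> V -> Prop.

Inductive walk : nat -> V -> V -> Prop :=
| walk0 x : walk 0 x x
| walkS n x y z : adj x y -> walk n y z -> walk (S n) x z.

Definition dist_le (x y : V) (n : nat) : Prop :=
  exists m, (m <= n)%nat /\ walk m x y.

Definition dist_eq (x y : V) (n : nat) : Prop :=
  dist_le x y n /\ forall j, (j < n)%nat -> ~ dist_le x y j.

Definition symmetric_graph : Prop := forall x y, adj x y -> adj y x.
Definition connected_graph : Prop := forall x y, exists n, dist_le x y n.

Definition r_disjoint (X Y : V -> Prop) (r : R) : Prop :=
  forall a b m, X a -> Y b -> walk m a b -> r < INR m.

Definition layer (x0 : V) (lam : R) (N : Z) (x : V) : Prop :=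
  exists d, dist_eq x x0 d /\ IZR N * lam < INR d /\ INR d <= (IZR N + 1) * lam.

Inductive kchain (X : V -> Prop) (k : nat) : V -> V -> Prop :=
| kchain0 x : X x -> kchain X k x x
| kchainS x y z : X x -> dist_le x y k -> kchain X k y z -> kchain X k x z.

Definition k_connected (X : V -> Prop) (k : nat) : Prop :=
  forall x y, X x -> X y -> kchain X k x y.

Definition is_block (x0 : V) (lam : R) (k : nat) (B : V -> Prop) : Prop :=
  exists N : Z,
    (forall x, B x -> layer x0 lam N x) /\
    (exists x, B x) /\
    k_connected B k /\
    (forall B' : V -> Prop,
        (forall x, B x -> B' x) -> (forall x, B' x -> layer x0 lam N x) ->
        k_connected B' k -> forall x, B' x -> B x).

End Graphs.

Arguments walk {V} adj.
Arguments dist_le {V} adj.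
Arguments dist_eq {V} adj.
Arguments symmetric_graph {V} adj.
Arguments connected_graph {V} adj.
Arguments r_disjoint {V} adj.
Arguments is_block {V} adj.

Definition skel_V {V : Type} (adj : V -> V -> Prop) (x0 : V) (lam : R) (k : nat)
  : Type := { B : V -> Prop | is_block adj x0 lam k B }.

Definition skel_adj {V : Type} (adj : V -> V -> Prop) (x0 : V) (lam : R) (k : nat)
  (B1 B2 : skel_V adj x0 lam k) : Prop :=
  B1 <> B2 /\ exists x y, proj1_sig B1 x /\ proj1_sig B2 y /\ adj x y.

(* preimage of a set S of skeleton vertices under the natural map
   (vertex |-> block containing it) *)
Definition skel_preimage {V : Type} (adj : V -> V -> Prop) (x0 : V) (lam : R) (k : nat)
  (S : skel_V adj x0 lam k -> Prop) : V -> Prop :=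
  fun v => exists B, S B /\ proj1_sig B v.

From Stdlib Require Import Reals Arith Lia Lra ZArith.
From Stdlib Require Import Classical FunctionalExtensionality PropExtensionality.
Open Scope R_scope.

(* Along an edge the distance to the root changes by at most one, and a layer of
   scale 2 consists of two consecutive distances.  Hence among three consecutive
   vertices of a walk, two lie in a common layer at distance at most 2, and thus
   in a common block of connectivity 2.  So every two steps of a walk in the base
   graph advance at most one step in the skeleton of scale 2 and connectivity 2:
   preimages of n-disjoint sets are even 2n-disjoint. *)

Section Walks.
Variables (W : Type) (e : W -> W -> Prop).

Lemma walk_app m n x y z : walk e m x y -> walk e n y z -> walk e (m + n) x z.
Proof. induction 1; intros; simpl; [assumption | econstructor; eauto]. Qed.

Lemma walk_snoc m x y z : walk e m x y -> e y z -> walk e (S m) x z.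
Proof.
  intros Hxy Hyz. rewrite <- Nat.add_1_r.
  apply walk_app with y; [exact Hxy | econstructor; [exact Hyz | constructor]].
Qed.

Lemma walk_rev (Hs : symmetric_graph e) m x y : walk e m x y -> walk e m y x.
Proof. induction 1; [constructor | eapply walk_snoc; eauto]. Qed.

Lemma dist_le_refl x n : dist_le e x x n.
Proof. exists 0%nat; split; [lia | constructor]. Qed.

Lemma dist_le_adj x y : e x y -> dist_le e x y 1.
Proof. intro Hxy. exists 1%nat; split; [lia | econstructor; [exact Hxy | constructor]]. Qed.

Lemma dist_le_sym (Hs : symmetric_graph e) x y n : dist_le e x y n -> dist_le e y x n.
Proof. intros [m [Hm Hw]]. exists m; split; [exact Hm | apply walk_rev; assumption]. Qed.

Lemma dist_le_trans x y z m n :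
  dist_le e x y m -> dist_le e y z n -> dist_le e x z (m + n).
Proof.
  intros [a [Ha Hxy]] [b [Hb Hyz]].
  exists (a + b)%nat; split; [lia | eapply walk_app; eauto].
Qed.

Lemma dist_le_mono x y m n : dist_le e x y m -> (m <= n)%nat -> dist_le e x y n.
Proof. intros [a [Ha Hw]] Hmn. exists a; split; [lia | exact Hw]. Qed.

Lemma dist_eq_unique x y d1 d2 : dist_eq e x y d1 -> dist_eq e x y d2 -> d1 = d2.
Proof.
  intros [H1 H1'] [H2 H2'].
  destruct (lt_eq_lt_dec d1 d2) as [[Hlt | Heq] | Hlt];
    [exfalso; exact (H2' d1 Hlt H1) | exact Heq | exfalso; exact (H1' d2 Hlt H2)].
Qed.

Lemma dist_le_dist_eq n x y : dist_le e x y n -> exists d, dist_eq e x y d.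
Proof.
  induction n as [n IH] using lt_wf_ind. intro Hn.
  destruct (classic (exists j, (j < n)%nat /\ dist_le e x y j)) as [[j [Hj Hxy]] | Hmin].
  - exact (IH j Hj Hxy).
  - exists n. split; [exact Hn |]. intros j Hj Hxy. apply Hmin. eauto.
Qed.

Lemma dist_eq_adj (Hs : symmetric_graph e) r u w du dw :
  e u w -> dist_eq e u r du -> dist_eq e w r dw -> (dw <= S du)%nat.
Proof.
  intros Huw [Hu _] [_ Hwmin].
  destruct (le_lt_dec dw (S du)) as [Hle | Hlt]; [exact Hle | exfalso].
  apply (Hwmin (S du) Hlt).
  replace (S du) with (1 + du)%nat by lia.
  eapply dist_le_trans; [apply dist_le_adj, Hs, Huw | exact Hu].
Qed.

End Walks.

Section KChains.
Variables (W : Type) (e : W -> W -> Prop) (k : nat).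

Lemma kchain_start X x y : kchain W e X k x y -> X x.
Proof. destruct 1; assumption. Qed.

Lemma kchain_end X x y : kchain W e X k x y -> X y.
Proof. induction 1; assumption. Qed.

Lemma kchain_app X x y z : kchain W e X k x y -> kchain W e X k y z -> kchain W e X k x z.
Proof. induction 1; intros; [assumption | econstructor; eauto]. Qed.

Lemma kchain_mono (X Y : W -> Prop) x y :
  (forall z, X z -> Y z) -> kchain W e X k x y -> kchain W e Y k x y.
Proof. intros HXY. induction 1; econstructor; eauto. Qed.

Lemma kchain_rev (Hs : symmetric_graph e) X x y : kchain W e X k x y -> kchain W e X k y x.
Proof.
  induction 1 as [x Hx | x y z Hx Hxy Hyz IH]; [constructor; assumption |].
  apply (kchain_app _ _ y); [exact IH |].
  apply (kchainS _ _ _ _ y x x (kchain_start _ _ _ Hyz)); [apply dist_le_sym |]; auto.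
  constructor; assumption.
Qed.

Lemma k_connected_union (Hs : symmetric_graph e) (P Q : W -> Prop) u w :
  k_connected W e P k -> k_connected W e Q k -> P u -> Q w -> dist_le e u w k ->
  k_connected W e (fun x => P x \/ Q x) k.
Proof.
  intros HP HQ Hu Hw Huw.
  assert (HPl : forall x y, P x -> P y -> kchain W e (fun x => P x \/ Q x) k x y)
    by (intros; apply (kchain_mono P); auto).
  assert (HQl : forall x y, Q x -> Q y -> kchain W e (fun x => P x \/ Q x) k x y)
    by (intros; apply (kchain_mono Q); auto).
  intros x y [Hx | Hx] [Hy | Hy]; auto.
  - apply (kchain_app _ _ u); [auto |].
    apply (kchainS _ _ _ _ u w y (or_introl Hu) Huw); auto.
  - apply (kchain_app _ _ w); [auto |].
    apply (kchainS _ _ _ _ w u y (or_intror Hw)); [apply dist_le_sym |]; auto.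
Qed.

End KChains.

Section Blocks.
Variables (W : Type) (e : W -> W -> Prop) (Hs : symmetric_graph e).
Variables (r : W) (lam : R) (k : nat).

Lemma layer_unique (Hlam : 0 < lam) N1 N2 v :
  layer W e r lam N1 v -> layer W e r lam N2 v -> N1 = N2.
Proof.
  intros [d1 [D1 [H1 H1']]] [d2 [D2 [H2 H2']]].
  rewrite <- (dist_eq_unique _ _ _ _ _ _ D1 D2) in H2, H2'.
  assert (Hlt : forall N N', IZR N * lam < IZR N' * lam + lam -> (N <= N')%Z).
  { intros N N' HNN'. apply Z.lt_succ_r, lt_IZR. rewrite succ_IZR.
    apply Rmult_lt_reg_r with lam; lra. }
  apply Z.le_antisymm; apply Hlt; lra.
Qed.

Lemma block_layer (B : skel_V e r lam k) v : proj1_sig B v -> exists N, layer W e r lam N v.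
Proof. destruct B as [P HP]; simpl. intro Hv. destruct HP as [N [HL _]]. eauto. Qed.

(* The block of v is the set of points reachable from v by a k-chain in its layer. *)
Lemma block_of_layer N v : layer W e r lam N v -> exists B : skel_V e r lam k, proj1_sig B v.
Proof.
  intro Hv.
  set (L := layer W e r lam N). set (C := fun y => kchain W e L k v y).
  assert (Hlift : forall x y, kchain W e L k x y -> C x -> kchain W e C k x y).
  { induction 1 as [x Hx | x y z Hx Hxy Hyz IH]; intro Cx; [constructor; exact Cx |].
    econstructor; [exact Cx | exact Hxy |]. apply IH.
    apply (kchain_app _ _ _ _ v x); [exact Cx |].
    apply (kchainS _ _ _ _ x y y Hx Hxy). constructor. exact (kchain_start _ _ _ _ _ _ Hyz). }
  assert (HB : is_block e r lam k C).
  { exists N. repeat split.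
    - intros x Hx. exact (kchain_end _ _ _ _ _ _ Hx).
    - exists v. constructor. exact Hv.
    - intros x y Hx Hy. apply Hlift; [| exact Hx].
      apply (kchain_app _ _ _ _ x v); [apply kchain_rev |]; assumption.
    - intros B' Hsub HL Hcon x Hx. apply (kchain_mono _ _ _ B' L _ _ HL).
      apply Hcon; [apply Hsub; constructor; exact Hv | exact Hx]. }
  exists (exist _ C HB). simpl. constructor. exact Hv.
Qed.

Lemma block_eq (Hlam : 0 < lam) (B1 B2 : skel_V e r lam k) u w N :
  proj1_sig B1 u -> proj1_sig B2 w -> layer W e r lam N u -> layer W e r lam N w ->
  dist_le e u w k -> B1 = B2.
Proof.
  destruct B1 as [P1 HB1], B2 as [P2 HB2]; simpl. intros Hu Hw Lu Lw Huw.
  pose proof HB1 as [N1 [L1 [_ [C1 M1]]]]. pose proof HB2 as [N2 [L2 [_ [C2 M2]]]].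
  pose proof (layer_unique Hlam N1 N u (L1 u Hu) Lu).
  pose proof (layer_unique Hlam N2 N w (L2 w Hw) Lw). subst N1 N2.
  assert (HU : k_connected W e (fun x => P1 x \/ P2 x) k)
    by exact (k_connected_union _ _ _ Hs _ _ u w C1 C2 Hu Hw Huw).
  assert (HL : forall x, P1 x \/ P2 x -> layer W e r lam N x)
    by (intros x [Hx | Hx]; auto).
  assert (P1 = P2) as <-.
  { apply functional_extensionality. intro x. apply propositional_extensionality. split.
    - intro Hx. apply (M2 _ (fun y Hy => or_intror Hy) HL HU). left. exact Hx.
    - intro Hx. apply (M1 _ (fun y Hy => or_introl Hy) HL HU). right. exact Hx. }
  subst. f_equal. apply proof_irrelevance.
Qed.

Lemma skel_dist_le_adj (A B : skel_V e r lam k) u w :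
  proj1_sig A u -> proj1_sig B w -> e u w -> dist_le (skel_adj e r lam k) A B 1.
Proof.
  intros Hu Hw Huw. destruct (classic (A = B)) as [<- | Hne].
  - apply dist_le_refl.
  - apply dist_le_adj. split; [exact Hne | exists u, w; auto].
Qed.

End Blocks.

Lemma skel_adj_sym {V} (adj : V -> V -> Prop) (Hsym : symmetric_graph adj) x0 lam k :
  symmetric_graph (skel_adj adj x0 lam k).
Proof.
  intros B1 B2 [Hne [x [y [Hx [Hy Hxy]]]]].
  split; [intro HB; apply Hne; symmetry; exact HB | exists y, x; auto].
Qed.

Section ScaleTwo.
Variables (W : Type) (e : W -> W -> Prop) (Hs : symmetric_graph e).
Variables (r : W) (k : nat) (Hk : (2 <= k)%nat).

Lemma layer2_iff N v :
  layer W e r 2 N v <-> exists d, dist_eq e v r d /\ (2 * N < Z.of_nat d <= 2 * N + 2)%Z.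
Proof.
  unfold layer. rewrite <- !mult_IZR, <- plus_IZR.
  split; intros [d [Hd [H1 H2]]]; exists d; split; try exact Hd;
    rewrite INR_IZR_INZ, <- mult_IZR in *.
  - apply lt_IZR in H1. apply le_IZR in H2. lia.
  - split; [apply IZR_lt | apply IZR_le]; lia.
Qed.

Lemma layer2_exists v d : dist_eq e v r d -> exists N, layer W e r 2 N v.
Proof.
  intro Hd. exists ((Z.of_nat d - 1) / 2)%Z. apply layer2_iff. exists d. split; [exact Hd |].
  pose proof (Z.div_mod (Z.of_nat d - 1) 2). pose proof (Z.mod_pos_bound (Z.of_nat d - 1) 2).
  lia.
Qed.

Lemma block_of_adj (A : skel_V e r 2 k) a w :
  proj1_sig A a -> e a w -> exists C : skel_V e r 2 k, proj1_sig C w.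
Proof.
  intros Ha Haw. destruct (block_layer _ _ _ _ _ A a Ha) as [N HN].
  apply layer2_iff in HN as [d [[Hd _] _]].
  destruct (dist_le_dist_eq W e (1 + d) w r) as [d' Hd'].
  { eapply dist_le_trans; [apply dist_le_adj, Hs, Haw | exact Hd]. }
  destruct (layer2_exists w d' Hd') as [N' HN'].
  exact (block_of_layer _ _ Hs _ _ _ _ _ HN').
Qed.

Lemma skel_dist_le_two_steps (A C : skel_V e r 2 k) v0 v1 v2 :
  proj1_sig A v0 -> proj1_sig C v2 -> e v0 v1 -> e v1 v2 ->
  dist_le (skel_adj e r 2 k) A C 1.
Proof.
  intros H0 H2 E01 E12.
  destruct (block_of_adj A v0 v1 H0 E01) as [B H1].
  destruct (block_layer _ _ _ _ _ A v0 H0) as [N0 L0].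
  destruct (block_layer _ _ _ _ _ B v1 H1) as [N1 L1].
  destruct (block_layer _ _ _ _ _ C v2 H2) as [N2 L2].
  assert (D01 : dist_le e v0 v1 k) by (apply dist_le_mono with 1%nat; [apply dist_le_adj | lia]; auto).
  assert (D12 : dist_le e v1 v2 k) by (apply dist_le_mono with 1%nat; [apply dist_le_adj | lia]; auto).
  assert (D02 : dist_le e v0 v2 k).
  { apply dist_le_mono with (1 + 1)%nat; [| lia].
    apply dist_le_trans with v1; apply dist_le_adj; assumption. }
  destruct (Z.eq_dec N0 N2) as [<- | N02].
  { rewrite (block_eq _ _ Hs _ _ _ Rlt_0_2 A C v0 v2 N0 H0 H2 L0 L2 D02). apply dist_le_refl. }
  destruct (Z.eq_dec N0 N1) as [<- | N01].
  { rewrite (block_eq _ _ Hs _ _ _ Rlt_0_2 A B v0 v1 N0 H0 H1 L0 L1 D01).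
    exact (skel_dist_le_adj _ _ _ _ _ B C v1 v2 H1 H2 E12). }
  destruct (Z.eq_dec N1 N2) as [<- | N12].
  { rewrite <- (block_eq _ _ Hs _ _ _ Rlt_0_2 B C v1 v2 N1 H1 H2 L1 L2 D12).
    exact (skel_dist_le_adj _ _ _ _ _ A B v0 v1 H0 H1 E01). }
  (* The layer of d1 contains d1 and one of d1 - 1, d1 + 1; so d0 and d2 both
     equal the other one, and lie in a common layer. *)
  exfalso.
  apply layer2_iff in L0 as [d0 [Q0 B0]], L1 as [d1 [Q1 B1]], L2 as [d2 [Q2 B2]].
  pose proof (dist_eq_adj _ _ Hs _ _ _ _ _ E01 Q0 Q1).
  pose proof (dist_eq_adj _ _ Hs _ _ _ _ _ (Hs _ _ E01) Q1 Q0).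
  pose proof (dist_eq_adj _ _ Hs _ _ _ _ _ E12 Q1 Q2).
  pose proof (dist_eq_adj _ _ Hs _ _ _ _ _ (Hs _ _ E12) Q2 Q1).
  lia.
Qed.

Lemma skel_dist_le_half_walk m : forall a b (A B : skel_V e r 2 k),
  walk e m a b -> proj1_sig A a -> proj1_sig B b ->
  forall L, (m <= 2 * L)%nat -> dist_le (skel_adj e r 2 k) A B L.
Proof.
  induction m as [m IH] using lt_wf_ind. intros a b A B Hw HA HB L HL.
  destruct Hw as [a | m1 a v1 b E1 Hw1].
  - destruct (block_layer _ _ _ _ _ A a HA) as [N HN].
    rewrite (block_eq _ _ Hs _ _ _ Rlt_0_2 A B a a N HA HB HN HN (dist_le_refl _ _ _ _)).
    apply dist_le_refl.
  - destruct Hw1 as [v1 | m2 v1 v2 b E2 Hw2].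
    + apply dist_le_mono with 1%nat; [exact (skel_dist_le_adj _ _ _ _ _ A B a v1 HA HB E1) | lia].
    + destruct (block_of_adj A a v1 HA E1) as [C1 HC1].
      destruct (block_of_adj C1 v1 v2 HC1 E2) as [C2 HC2].
      replace L with (1 + (L - 1))%nat by lia.
      apply dist_le_trans with C2.
      * exact (skel_dist_le_two_steps A C2 a v1 v2 HA HC2 E1 E2).
      * apply (IH m2 ltac:(lia) v2 b C2 B Hw2 HC2 HB). lia.
Qed.

Lemma skel_preimage_r_disjoint_double (X Y : skel_V e r 2 k -> Prop) n :
  r_disjoint (skel_adj e r 2 k) X Y (INR n) ->
  r_disjoint e (skel_preimage e r 2 k X) (skel_preimage e r 2 k Y) (INR (2 * n)).
Proof.
  intros Hdisj a b m [A [HXA HAa]] [B [HYB HBb]] Hw.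
  apply lt_INR. destruct (le_lt_dec m (2 * n)) as [Hm | Hm]; [exfalso | exact Hm].
  destruct (skel_dist_le_half_walk m a b A B Hw HAa HBb n Hm) as [L [HLn HL]].
  pose proof (INR_lt _ _ (Hdisj A B L HXA HYB HL)). lia.
Qed.

End ScaleTwo.

Theorem lemma6 (V : Type) (adj : V -> V -> Prop) (x0 : V) (lam : R) (k : nat)
  (Hsym : symmetric_graph adj) (Hconn : connected_graph adj)
  (Hlam : 1 <= lam) (Hk : (1 <= k)%nat)
  (r : skel_V adj x0 lam k) (Hr : proj1_sig r x0)
  (X Y : skel_V (skel_adj adj x0 lam k) r 2 2 -> Prop) (n : nat) (Hn : (1 < n)%nat)
  (Hdisj : r_disjoint (skel_adj (skel_adj adj x0 lam k) r 2 2) X Y (INR n)) :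
  r_disjoint (skel_adj adj x0 lam k)
    (skel_preimage (skel_adj adj x0 lam k) r 2 2 X)
    (skel_preimage (skel_adj adj x0 lam k) r 2 2 Y)
    (INR n + INR n / 2).
Proof.
  intros a b m Ha Hb Hw.
  apply Rle_lt_trans with (INR (2 * n)).
  - rewrite mult_INR. simpl (INR 2). pose proof (pos_INR n). lra.
  - exact (skel_preimage_r_disjoint_double _ _ (skel_adj_sym adj Hsym x0 lam k) r 2 (le_n 2)
             X Y n Hdisj a b m Ha Hb Hw).
Qed.
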